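(* Let $\mathbb{X}$ be a real or complex Banach algebra with identity, let $k\ge1$ be an integer, let $a_0,\dots,a_k,b_0,\dots,b_k\in\mathbb{X}$ with $a_k\ne0$ or $b_k\ne0$, and let $g_n:\mathbb{X}\to\mathbb{X}$, $n\ge0$, be functions such that for some real $\sigma>0$, $$|g_n(\xi)|\le\sigma|\xi|\quad\text{for all }\xi\in\mathbb{X}\text{ and all }n.$$ Assume $$\alpha:=\sum_{i=0}^{k}\big(|a_i|+\sigma|b_i|\big)<1.$$ Then every solution $\{x_n\}$ of $$x_{n+1}=\sum_{i=0}^{k}a_ix_{n-i}+g_n\Big(\sum_{i=0}^{k}b_ix_{n-i}\Big),\quad n=0,1,2,\dots$$ with initial values $x_0,x_{-1},\dots,x_{-k}\in\mathbb{X}$ satisfies, for all $n\ge1$, $$|x_n|\le\alpha^{n/(k+1)}\max\{|x_0|,|x_{-1}|,\dots,|x_{-k}|\}.$$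
   Context: A Banach algebra with identity is a Banach space $\mathbb{X}$ (norm $|\cdot|$) with an associative, bilinear multiplication satisfying $|xy|\le|x||y|$ and having an identity $1$ with $|1|=1$; scalar multiplication satisfies $\alpha(xy)=(\alpha x)y=x(\alpha y)$. A solution of the difference equation is the sequence generated by iteration from the $k+1$ initial values. *)

From Stdlib Require Import Reals ZArith.
Open Scope R_scope.

(* A real Banach algebra with identity.  (A complex Banach algebra is in
   particular a real one by restriction of scalars, with the same norm.) *)
Record BanachAlgebra := {
  carrier :> Type;
  bzero : carrier;
  bone : carrier;
  badd : carrier -> carrier -> carrier;
  bopp : carrier -> carrier;
  bscal : R -> carrier -> carrier;
  bmul : carrier -> carrier -> carrier;
  bnorm : carrier -> R;
  badd_assoc : forall x y z, badd x (badd y z) = badd (badd x y) z;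
  badd_comm : forall x y, badd x y = badd y x;
  badd_0 : forall x, badd x bzero = x;
  badd_opp : forall x, badd x (bopp x) = bzero;
  bscal_assoc : forall a b x, bscal a (bscal b x) = bscal (a * b) x;
  bscal_1 : forall x, bscal 1 x = x;
  bscal_addr : forall a x y, bscal a (badd x y) = badd (bscal a x) (bscal a y);
  bscal_addl : forall a b x, bscal (a + b) x = badd (bscal a x) (bscal b x);
  bnorm_eq0 : forall x, bnorm x = 0 <-> x = bzero;
  bnorm_scal : forall a x, bnorm (bscal a x) = Rabs a * bnorm x;
  bnorm_triangle : forall x y, bnorm (badd x y) <= bnorm x + bnorm y;
  bcomplete : forall u : nat -> carrier,
    (forall eps, eps > 0 -> exists N, forall m n, (m >= N)%nat -> (n >= N)%nat ->
        bnorm (badd (u m) (bopp (u n))) < eps) ->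
    exists l, forall eps, eps > 0 -> exists N, forall n, (n >= N)%nat ->
        bnorm (badd (u n) (bopp l)) < eps;
  bmul_assoc : forall x y z, bmul x (bmul y z) = bmul (bmul x y) z;
  bmul_addl : forall x y z, bmul (badd x y) z = badd (bmul x z) (bmul y z);
  bmul_addr : forall x y z, bmul x (badd y z) = badd (bmul x y) (bmul x z);
  bmul_scall : forall a x y, bmul (bscal a x) y = bscal a (bmul x y);
  bmul_scalr : forall a x y, bmul x (bscal a y) = bscal a (bmul x y);
  bnorm_mul : forall x y, bnorm (bmul x y) <= bnorm x * bnorm y;
  bmul_1l : forall x, bmul bone x = x;
  bmul_1r : forall x, bmul x bone = x;
  bnorm_1 : bnorm bone = 1
}.

Arguments bzero {_}. Arguments bone {_}. Arguments badd {_}. Arguments bopp {_}.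
Arguments bscal {_}. Arguments bmul {_}. Arguments bnorm {_}.

Fixpoint bsum (X : BanachAlgebra) (f : nat -> X) (k : nat) : X :=
  match k with
  | O => f O
  | S k' => badd (bsum X f k') (f (S k'))
  end.

Fixpoint maxR (f : nat -> R) (k : nat) : R :=
  match k with
  | O => f O
  | S k' => Rmax (maxR f k') (f (S k'))
  end.

(* real power with the convention 0^y = 0 (used only for y > 0) *)
Definition rpow (x y : R) : R := if Rle_dec x 0 then 0 else Rpower x y.

From Stdlib Require Import Reals ZArith Lra Lia.
Open Scope R_scope.

(* Put alpha = sum_{i<=k} (|a_i| + sigma |b_i|) and
   M = max_{0<=j<=k} |x_{-j}|.  One step of the recurrence contracts the
   sliding window of the last k+1 values:
       |x_{n+1}| <= alpha * max_{0<=i<=k} |x_{n-i}|,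
   by the triangle inequality, submultiplicativity of the norm and the
   growth bound |g_n(xi)| <= sigma |xi|.  A purely real lemma then shows that
   every real sequence u with this delayed-contraction property and u_m <= M
   on the initial window satisfies u_m <= M alpha^{max(m,0)/(k+1)}: by
   induction the window ending at n is bounded by M alpha^{(n-k)/(k+1)}, and
   one more step gains the factor alpha = alpha^{(k+1)/(k+1)}.  Finally
   alpha > 0 because a_k or b_k is nonzero, so rpow alpha is Rpower alpha. *)

(* Norms are nonnegative: 0 = |x - x| <= |x| + |-x| = 2|x|. *)
Lemma bnorm_ge0 (X : BanachAlgebra) (x : X) : 0 <= bnorm x.
Proof.
  assert (Hzero : bscal 0 x = bzero).
  { apply bnorm_eq0. rewrite bnorm_scal, Rabs_R0. ring. }
  assert (Hcancel : badd x (bscal (-1) x) = bzero).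
  { rewrite <- (bscal_1 X x) at 1. rewrite <- bscal_addl.
    replace (1 + -1) with 0 by ring. exact Hzero. }
  pose proof (bnorm_triangle X x (bscal (-1) x)) as Htri.
  rewrite Hcancel, bnorm_scal, (Rabs_left (-1)) in Htri by lra.
  assert (bnorm (@bzero X) = 0) by (apply bnorm_eq0; reflexivity).
  lra.
Qed.

Lemma bnorm_bsum (X : BanachAlgebra) (f : nat -> X) (k : nat) :
  bnorm (bsum X f k) <= sum_f_R0 (fun i => bnorm (f i)) k.
Proof.
  induction k as [|k IH]; simpl; [lra|].
  eapply Rle_trans; [apply bnorm_triangle | lra].
Qed.

Lemma bnorm_bsum_mul (X : BanachAlgebra) (c y : nat -> X) (k : nat) (B : R) :
  (forall i, (i <= k)%nat -> bnorm (y i) <= B) ->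
  bnorm (bsum X (fun i => bmul (c i) (y i)) k)
    <= sum_f_R0 (fun i => bnorm (c i)) k * B.
Proof.
  intros Hy. rewrite Rmult_comm, scal_sum.
  eapply Rle_trans; [apply bnorm_bsum|].
  apply sum_Rle. intros i Hi.
  eapply Rle_trans; [apply bnorm_mul|].
  apply Rmult_le_compat_l; [apply bnorm_ge0 | auto].
Qed.

Lemma maxR_ge (f : nat -> R) (k j : nat) : (j <= k)%nat -> f j <= maxR f k.
Proof.
  induction k as [|k IH]; intros Hj; simpl.
  - replace j with 0%nat by lia. lra.
  - destruct (Nat.eq_dec j (S k)) as [->|Hne]; [apply Rmax_r|].
    eapply Rle_trans; [apply IH; lia | apply Rmax_l].
Qed.

Lemma maxR_le (f : nat -> R) (k : nat) (B : R) :
  (forall j, (j <= k)%nat -> f j <= B) -> maxR f k <= B.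
Proof.
  induction k as [|k IH]; intros Hf; simpl; [auto|].
  apply Rmax_lub; auto.
Qed.

Lemma sum_f_R0_ge_last (c : nat -> R) (k : nat) :
  (forall i, 0 <= c i) -> c k <= sum_f_R0 c k.
Proof.
  intros Hc. destruct k as [|k]; simpl; [lra|].
  pose proof (cond_pos_sum c k Hc). lra.
Qed.

Lemma sum_f_R0_lincomb (p q : nat -> R) (s : R) (k : nat) :
  sum_f_R0 (fun i => p i + s * q i) k = sum_f_R0 p k + s * sum_f_R0 q k.
Proof. induction k as [|k IH]; simpl; [|rewrite IH]; ring. Qed.

Lemma Rpower_antitone (al e1 e2 : R) :
  0 < al <= 1 -> e2 <= e1 -> Rpower al e1 <= Rpower al e2.
Proof.
  intros Hal He. unfold Rpower.
  assert (Hln : ln al <= 0).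
  { destruct (Rle_lt_or_eq_dec al 1 (proj2 Hal)) as [Hlt|Heq].
    - left. rewrite <- ln_1. apply ln_increasing; lra.
    - rewrite Heq, ln_1. lra. }
  destruct (Rle_lt_or_eq_dec _ _ (Rmult_le_compat_neg_l _ _ _ Hln He)) as [Hlt|Heq].
  - left. apply exp_increasing. lra.
  - right. f_equal. lra.
Qed.

Definition decay_exponent (k : nat) (m : Z) : R := IZR (Z.max m 0) / INR (k + 1).

Lemma decay_exponent_monotone (k : nat) (m1 m2 : Z) :
  (m1 <= m2)%Z -> decay_exponent k m1 <= decay_exponent k m2.
Proof.
  intros Hm. unfold decay_exponent, Rdiv.
  apply Rmult_le_compat_r.
  - left. apply Rinv_0_lt_compat, lt_0_INR. lia.
  - apply IZR_le. lia.
Qed.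

Lemma decay_exponent_window (k : nat) (n : Z) :
  decay_exponent k (n + 1) <= decay_exponent k (n - Z.of_nat k) + 1.
Proof.
  assert (HK : 0 < INR (k + 1)) by (apply lt_0_INR; lia).
  unfold decay_exponent. apply (Rmult_le_reg_r (INR (k + 1))); [exact HK|].
  unfold Rdiv. rewrite Rmult_plus_distr_r, !Rmult_assoc, Rinv_l by lra.
  rewrite !Rmult_1_r, Rmult_1_l, INR_IZR_INZ, <- plus_IZR.
  apply IZR_le. lia.
Qed.

Lemma decay_exponent_nonpos (k : nat) (m : Z) :
  (m <= 0)%Z -> decay_exponent k m = 0.
Proof. intros Hm. unfold decay_exponent. rewrite Z.max_r by lia. apply Rdiv_0_l. Qed.

Lemma decay_exponent_pos (k : nat) (m : Z) :
  (0 <= m)%Z -> decay_exponent k m = IZR m / INR (k + 1).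
Proof. intros Hm. unfold decay_exponent. rewrite Z.max_l by lia. reflexivity. Qed.

Lemma delayed_contraction_decay (u : Z -> R) (k : nat) (al M : R) :
  0 < al <= 1 -> 0 <= M ->
  (forall j, (j <= k)%nat -> u (- Z.of_nat j)%Z <= M) ->
  (forall n : nat,
     u (Z.of_nat n + 1)%Z <= al * maxR (fun i => u (Z.of_nat n - Z.of_nat i)%Z) k) ->
  forall m : Z, (- Z.of_nat k <= m)%Z ->
    u m <= M * Rpower al (decay_exponent k m).
Proof.
  intros Hal HM Hinit Hstep.
  assert (Hupto : forall (n : nat) (m : Z), (- Z.of_nat k <= m <= Z.of_nat n)%Z ->
            u m <= M * Rpower al (decay_exponent k m)).
  { induction n as [|n IH]; intros m Hm.
    - rewrite decay_exponent_nonpos, Rpower_O, Rmult_1_r by (lia || lra).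
      replace m with (- Z.of_nat (Z.to_nat (- m)))%Z by lia.
      apply Hinit. lia.
    - destruct (Z.eq_dec m (Z.of_nat (S n))) as [->|Hne]; [|apply IH; lia].
      set (B := M * Rpower al (decay_exponent k (Z.of_nat n - Z.of_nat k))).
      assert (Hwindow : maxR (fun i => u (Z.of_nat n - Z.of_nat i)%Z) k <= B).
      { apply maxR_le. intros i Hi.
        eapply Rle_trans; [apply IH; lia|].
        apply Rmult_le_compat_l; [exact HM|].
        apply Rpower_antitone, decay_exponent_monotone; [exact Hal | lia]. }
      rewrite Nat2Z.inj_succ, <- Z.add_1_r.
      eapply Rle_trans; [apply Hstep|].
      eapply Rle_trans; [apply Rmult_le_compat_l; [lra | exact Hwindow]|].
      unfold B. rewrite <- (Rpower_1 al) at 1 by lra.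
      rewrite Rmult_comm, Rmult_assoc, <- Rpower_plus.
      apply Rmult_le_compat_l; [exact HM|].
      apply Rpower_antitone, decay_exponent_window; exact Hal. }
  intros m Hm. apply (Hupto (Z.to_nat m)). lia.
Qed.

Section Recurrence.

Variables (X : BanachAlgebra) (k : nat) (a b : nat -> X)
  (g : nat -> X -> X) (sigma : R) (x : Z -> X).

Hypothesis sigma_pos : sigma > 0.
Hypothesis g_growth : forall (n : nat) (xi : X), bnorm (g n xi) <= sigma * bnorm xi.
Hypothesis x_rec : forall n : nat,
  x (Z.of_nat n + 1)%Z =
  badd (bsum X (fun i => bmul (a i) (x (Z.of_nat n - Z.of_nat i)%Z)) k)
       (g n (bsum X (fun i => bmul (b i) (x (Z.of_nat n - Z.of_nat i)%Z)) k)).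

Definition rate : R := sum_f_R0 (fun i => bnorm (a i) + sigma * bnorm (b i)) k.

Lemma rate_pos : a k <> bzero \/ b k <> bzero -> 0 < rate.
Proof.
  intros Hab.
  assert (Hterm : forall i, 0 <= bnorm (a i) + sigma * bnorm (b i)).
  { intros i. pose proof (bnorm_ge0 X (a i)). pose proof (bnorm_ge0 X (b i)). nra. }
  eapply Rlt_le_trans; [|apply (sum_f_R0_ge_last _ k Hterm)].
  pose proof (bnorm_ge0 X (a k)). pose proof (bnorm_ge0 X (b k)).
  destruct Hab as [Hne|Hne].
  - assert (bnorm (a k) <> 0) by (intro E; apply Hne, bnorm_eq0, E). nra.
  - assert (bnorm (b k) <> 0) by (intro E; apply Hne, bnorm_eq0, E). nra.
Qed.

Lemma recurrence_step_bound (n : nat) :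
  bnorm (x (Z.of_nat n + 1)%Z)
    <= rate * maxR (fun i => bnorm (x (Z.of_nat n - Z.of_nat i)%Z)) k.
Proof.
  set (B := maxR (fun i => bnorm (x (Z.of_nat n - Z.of_nat i)%Z)) k).
  assert (Hwindow : forall i, (i <= k)%nat -> bnorm (x (Z.of_nat n - Z.of_nat i)%Z) <= B)
    by (intros i Hi; apply (maxR_ge (fun i => bnorm (x (Z.of_nat n - Z.of_nat i)%Z))), Hi).
  pose proof (bnorm_bsum_mul X a (fun i => x (Z.of_nat n - Z.of_nat i)%Z) k B Hwindow) as Ha.
  pose proof (bnorm_bsum_mul X b (fun i => x (Z.of_nat n - Z.of_nat i)%Z) k B Hwindow) as Hb.
  rewrite x_rec. eapply Rle_trans; [apply bnorm_triangle|].
  eapply Rle_trans; [apply Rplus_le_compat_l, g_growth|].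
  unfold rate. rewrite sum_f_R0_lincomb. nra.
Qed.

End Recurrence.

Theorem lemma2 (X : BanachAlgebra) (k : nat) (a b : nat -> X)
  (g : nat -> X -> X) (sigma : R) (x : Z -> X) :
  (1 <= k)%nat ->
  (a k <> bzero \/ b k <> bzero) ->
  sigma > 0 ->
  (forall (n : nat) (xi : X), bnorm (g n xi) <= sigma * bnorm xi) ->
  sum_f_R0 (fun i => bnorm (a i) + sigma * bnorm (b i)) k < 1 ->
  (forall n : nat,
     x (Z.of_nat n + 1)%Z =
     badd (bsum X (fun i => bmul (a i) (x (Z.of_nat n - Z.of_nat i)%Z)) k)
          (g n (bsum X (fun i => bmul (b i) (x (Z.of_nat n - Z.of_nat i)%Z)) k))) ->
  forall n : Z, (1 <= n)%Z ->
    bnorm (x n) <=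
      rpow (sum_f_R0 (fun i => bnorm (a i) + sigma * bnorm (b i)) k)
           (IZR n / INR (k + 1))
      * maxR (fun j => bnorm (x (- Z.of_nat j)%Z)) k.
Proof.
  intros _ Hab Hsigma Hg Hrate Hrec n Hn.
  fold (rate X k a b sigma) in *.
  set (M := maxR (fun j => bnorm (x (- Z.of_nat j)%Z)) k).
  pose proof (rate_pos X k a b sigma Hsigma Hab) as Hpos.
  assert (HM : 0 <= M).
  { eapply Rle_trans; [apply (bnorm_ge0 X (x 0%Z))|].
    apply (maxR_ge (fun j => bnorm (x (- Z.of_nat j)%Z)) k 0). lia. }
  pose proof (delayed_contraction_decay (fun m => bnorm (x m)) k (rate X k a b sigma) M
    ltac:(lra) HM (maxR_ge _ k) (recurrence_step_bound X k a b g sigma x Hsigma Hg Hrec)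
    n ltac:(lia)) as Hdecay.
  rewrite decay_exponent_pos in Hdecay by lia.
  unfold rpow. destruct (Rle_dec (rate X k a b sigma) 0); [lra|].
  rewrite Rmult_comm. exact Hdecay.
Qed.
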